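(* Let $s,k$ be positive integers and let $n\ge3(s+1)k-1$. Let $\mathcal F\subset\binom{[n]}{k}$ be a family such that for every $A\in\mathcal F$ there is a positive integer $\ell$ with $|A\cap[3(s+1)\ell-1]|\ge\ell$. Then $$(3s+2)\,|\partial\mathcal F|\ge|\mathcal F|.$$
   Context: $[m]=\{1,\ldots,m\}$; $\binom{X}{k}$ is the family of all $k$-subsets of $X$. For $\mathcal F\subset\binom{[n]}{k}$, its (lower) shadow is $\partial\mathcal F:=\bigcup_{F\in\mathcal F}\binom{F}{k-1}$. *)

From mathcomp Require Import all_boot.
Set Implicit Arguments. Unset Strict Implicit. Unset Printing Implicit Defensive.

(* Ground set [n] = {1,...,n} is modelled by 'I_n, the ordinal i standing for i+1. *)

Definition binom (T : finType) (X : {set T}) (k : nat) : {set {set T}} :=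
  [set B in powerset X | #|B| == k].

Definition shadow (n k : nat) (FF : {set {set 'I_n}}) : {set {set 'I_n}} :=
  \bigcup_(F in FF) binom F k.-1.

Definition initseg (n m : nat) : {set 'I_n} := [set i : 'I_n | i.+1 <= m].

From mathcomp Require Import all_boot zify.
Set Implicit Arguments. Unset Strict Implicit. Unset Printing Implicit Defensive.

(* Write c = 3(s+1); we show |F| <= (c-1)|∂F| for every family F of k-sets each of
   which meets some initial segment [c l - 1] in at least l elements, by induction on
   an m with all sets of F inside [m].  If m <= c k - 1, the local LYM inequality
   k |F| <= (m - k + 1) |∂F| already suffices.  Otherwise split F at x = m into the
   sets avoiding x and the sets through x with x removed.  As x lies beyond every
   segment [c l - 1] with l <= k, both families still satisfy the hypothesis inside
   [m - 1], and ∂F contains the shadow of the first family disjointly from the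
   shadow of the second with x added back; the induction hypothesis concludes. *)

Section SetFamilies.

Variable T : finType.
Implicit Types (x : T) (U A B : {set T}) (F : {set {set T}}).

Lemma sum_nat_boolE (D : {pred T}) (P : pred T) :
  \sum_(x in D) (P x : nat) = #|[set x in D | P x]|.
Proof. by rewrite -big_mkcondr /= sum1dep_card. Qed.

Lemma card_binom A j : #|binom A j| = 'C(#|A|, j).
Proof. by rewrite -cards_draws; apply: eq_card => B; rewrite !inE. Qed.

Lemma binomP U B j :
  reflect (B \subset U /\ #|B| = j) (B \in binom U j).
Proof. by rewrite !inE; apply: (iffP andP) => -[-> /eqP]. Qed.

Lemma card_binom_supersets U B :
  #|[set A in binom U #|B|.+1 | B \subset A]| <= #|U :\: B|.
Proof.
apply: leq_trans (leq_imset_card (fun i => i |: B) _); apply: subset_leq_card.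
apply/subsetP => A; rewrite inE => /andP[/binomP[AU cardA] BA].
have /cards1P[i AB_i] : #|A :\: B| == 1.
  by rewrite cardsD (setIidPr BA) cardA subSnn.
have iAB : i \in A :\: B by rewrite AB_i set11.
apply/imsetP; exists i; first exact: subsetP (setSD B AU) i iAB.
by rewrite -{1}(setID A B) (setIidPr BA) AB_i setUC.
Qed.

Definition deletion x F : {set {set T}} := [set A in F | x \notin A].

Definition link x F : {set {set T}} := [set A :\ x | A in F & x \in A].

Lemma card_deletion_link x F : #|F| = #|deletion x F| + #|link x F|.
Proof.
rewrite card_in_imset => [|A1 A2]; last first.
  by rewrite !inE => /andP[_ xA1] /andP[_ xA2] eqA; rewrite -(setD1K xA1) eqA setD1K.
by rewrite -(cardsID [set A : {set T} | x \in A] F) addnC; congr (_ + _);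
  apply: eq_card => A; rewrite !inE andbC.
Qed.

Lemma deletion_sub x F : deletion x F \subset F.
Proof. by apply/subsetP => A; rewrite inE => /andP[]. Qed.

Lemma deletion_binom U k x F :
  F \subset binom U k -> deletion x F \subset binom (U :\ x) k.
Proof.
move=> FU; apply/subsetP => A; rewrite inE => /andP[/(subsetP FU)/binomP[AU cardA] xA].
by apply/binomP; split=> //; apply/subsetP => y yA; rewrite !inE (subsetP AU) // andbT;
  apply: contraNneq xA => <-.
Qed.

Lemma link_binom U k x F :
  F \subset binom U k -> link x F \subset binom (U :\ x) k.-1.
Proof.
move=> FU; apply/subsetP => B /imsetP[A]; rewrite inE => /andP[AF xA] ->.
have /binomP[AU cardA] := subsetP FU A AF.
by apply/binomP; rewrite setSD // -cardA (cardsD1 x A) xA.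
Qed.

End SetFamilies.

Section Shadow.

Variable n : nat.
Implicit Types (x : 'I_n) (U A B : {set 'I_n}) (F G : {set {set 'I_n}}).

Lemma binom_sub_shadow k F A : A \in F -> binom A k.-1 \subset shadow k F.
Proof. exact: bigcup_sup. Qed.

Lemma local_lym U k F : 0 < k -> F \subset binom U k ->
  k * #|F| <= (#|U| - k.-1) * #|shadow k F|.
Proof.
move=> k_gt0 FU; set pairs := \sum_(A in F) \sum_(B in shadow k F) (B \in binom A k.-1).
have count_by_sets : pairs = k * #|F|.
  rewrite mulnC -sum_nat_const; apply: eq_bigr => A AF.
  have /binomP[_ cardA] := subsetP FU A AF.
  rewrite sum_nat_boolE (eq_card (B := binom A k.-1)) => [|B]; last first.
    by rewrite inE andb_idl // => /(subsetP (binom_sub_shadow k AF)).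
  by rewrite card_binom cardA -subn1 bin_sub // bin1.
have count_by_shadow : pairs <= #|shadow k F| * (#|U| - k.-1).
  rewrite /pairs exchange_big /= -sum_nat_const; apply: leq_sum => B.
  case/bigcupP=> A0 A0F /binomP[BA0 cardB].
  have /binomP[A0U _] := subsetP FU A0 A0F.
  have BU : B \subset U := subset_trans BA0 A0U.
  have -> : #|U| - k.-1 = #|U :\: B| by rewrite cardsD (setIidPr BU) cardB.
  rewrite sum_nat_boolE; apply: leq_trans (card_binom_supersets U B).
  apply: subset_leq_card; apply/subsetP => A; rewrite inE => /andP[AF].
  case/binomP=> BA _; rewrite inE BA andbT cardB prednK //.
  exact: subsetP FU A AF.
by rewrite -count_by_sets mulnC.
Qed.

Lemma shadowS k F G : F \subset G -> shadow k F \subset shadow k G.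
Proof.
move=> FG; apply/subsetP => B /bigcupP[A AF BA].
exact: subsetP (binom_sub_shadow k (subsetP FG A AF)) B BA.
Qed.

(* [[set x] \notin F] is needed: for F = {{x}, {y}} the left-hand side is 2 but
   shadow 1 F = {set0}. *)
Lemma shadow_deletion_link U k x F : F \subset binom U k -> [set x] \notin F ->
  #|shadow k (deletion x F)| + #|shadow k.-1 (link x F)| <= #|shadow k F|.
Proof.
move=> FU xF; set S0 := shadow k _; set S1 := shadow k.-1 _.
have x_notin_S1 B : B \in S1 -> x \notin B.
  case/bigcupP=> G /imsetP[A _ ->] /binomP[BA _].
  by apply/negP => /(subsetP BA); rewrite !inE eqxx.
have S0F : S0 \subset shadow k F by apply/shadowS/deletion_sub.
have S1F : [set x |: B | B in S1] \subset shadow k F.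
  apply/subsetP => C /imsetP[B B_S1 ->]; have xB := x_notin_S1 B B_S1.
  case/bigcupP: B_S1 => G /imsetP[A]; rewrite inE => /andP[AF xA] -> /binomP[BA cardB].
  have /binomP[_ cardA] := subsetP FU A AF.
  have Ax_gt0 : 0 < #|A :\ x|.
    rewrite card_gt0; apply: contraNneq xF => Ax0.
    by rewrite -[[set x]]setU0 -Ax0 setD1K.
  apply: subsetP (binom_sub_shadow k AF) _ _; apply/binomP; split.
    by rewrite -(setD1K xA) setUS.
  by rewrite cardsU1 xB cardB -cardA (cardsD1 x A) xA add1n /= prednK.
have disjoint_S0_S1 : S0 :&: [set x |: B | B in S1] = set0.
  apply/setP => B; rewrite !inE; apply/negbTE/nandP.
  case: (boolP (x \in B)) => xB; [left | right].
    apply/bigcupP => -[A]; rewrite inE => /andP[_ xA] /binomP[BA _].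
    by rewrite (subsetP BA) in xA.
  by apply: contraNN xB => /imsetP[C _ ->]; rewrite setU11.
rewrite -(card_in_imset (f := fun B => x |: B) (D := S1)); last first.
  move=> B1 B2 /x_notin_S1 xB1 /x_notin_S1 xB2 eqB.
  by rewrite -(setU1K xB1) eqB setU1K.
by rewrite -cardsUI disjoint_S0_S1 cards0 addn0 subset_leq_card // subUset S0F.
Qed.

End Shadow.

Definition initially_dense n c (A : {set 'I_n}) : Prop :=
  exists l, 0 < l /\ l <= #|A :&: initseg n (c * l - 1)|.

Section InitiallyDense.

Variables n c : nat.
Implicit Types (x : 'I_n) (A : {set 'I_n}) (F : {set {set 'I_n}}).

Lemma initseg_ge m : n <= m -> initseg n m = setT.
Proof. by move=> nm; apply/setP => i; rewrite !inE (leq_trans (ltn_ord i)). Qed.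

Lemma initseg_S_setD1 x : initseg n x.+1 :\ x = initseg n x.
Proof.
apply/setP => i; rewrite !inE ltnS leq_eqVlt -val_eqE.
by case: ltngtP => // ->; rewrite eqxx.
Qed.

Lemma card_initseg_le m : #|initseg n m| <= m.
Proof.
have [mn | /ltnW nm] := leqP m n; last by rewrite initseg_ge // cardsT card_ord.
rewrite -[m in _ <= m]card_ord -cardsT.
apply: leq_trans (leq_imset_card (widen_ord mn) _); apply: subset_leq_card.
apply/subsetP => i; rewrite inE => im.
by apply/imsetP; exists (Ordinal im); last exact: val_inj.
Qed.

Lemma initially_dense_card_gt0 A : initially_dense c A -> 0 < #|A|.
Proof.
case=> l [l_gt0 dense]; apply: leq_trans l_gt0 (leq_trans dense _).
exact/subset_leq_card/subsetIl.
Qed.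

Lemma initially_dense_setD1 x A :
  c * #|A| - 1 <= x -> initially_dense c A -> initially_dense c (A :\ x).
Proof.
move=> Ax [l [l_gt0 dense]]; exists l; split=> //.
have lA : l <= #|A| by apply: leq_trans dense _; exact/subset_leq_card/subsetIl.
apply: leq_trans dense _.
have x_out : x \notin initseg n (c * l - 1).
  by rewrite inE -ltnNge ltnS (leq_trans _ Ax) // leq_sub2r // leq_mul2l lA orbT.
apply/subset_leq_card/subsetP => y /setIP[yA yI].
by rewrite inE yI andbT !inE yA andbT; apply: contraNneq x_out => <-.
Qed.

Lemma shadow_initially_dense_short m k F :
  m <= c * k - 1 -> F \subset binom (initseg n m) k ->
  {in F, forall A, initially_dense c A} -> #|F| <= c.-1 * #|shadow k F|.
Proof.
move=> m_short FI Fdense; have [-> | [A AF]] := set_0Vmem F; first by rewrite cards0.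
have /binomP[_ cardA] := subsetP FI A AF.
have k_gt0 : 0 < k by rewrite -cardA; exact: initially_dense_card_gt0 (Fdense A AF).
rewrite -(leq_pmul2l k_gt0); apply: leq_trans (local_lym k_gt0 FI) _.
rewrite mulnA leq_mul2r; apply/orP; right.
have := card_initseg_le m; rewrite -!subn1 mulnBr muln1 mulnC; lia.
Qed.

Lemma shadow_initially_dense_initseg m k F :
  F \subset binom (initseg n m) k ->
  {in F, forall A, initially_dense c A} -> #|F| <= c.-1 * #|shadow k F|.
Proof.
elim: m k F => [|m IHm] k F FI Fdense; first exact: shadow_initially_dense_short FI _.
have [m_short | m_long] := leqP m.+1 (c * k - 1).
  exact: shadow_initially_dense_short FI Fdense.
have [nm | mn] := leqP n m.
  by apply: IHm Fdense; rewrite (initseg_ge nm) -(initseg_ge (leqW nm)).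
pose x := Ordinal mn.
have Ix : initseg n m.+1 :\ x = initseg n m := initseg_S_setD1 x.
have x_late A : A \in F -> c * #|A| - 1 <= x.
  by move/(subsetP FI)/binomP=> [_ ->] /=; rewrite -ltnS.
have xF : [set x] \notin F.
  apply/negP => xF; have := initially_dense_setD1 (x_late _ xF) (Fdense _ xF).
  by rewrite setDv => /initially_dense_card_gt0; rewrite cards0.
rewrite (card_deletion_link x F).
apply: leq_trans (leq_mul (leqnn c.-1) (shadow_deletion_link FI xF)).
rewrite mulnDr leq_add //; apply: IHm; rewrite -?Ix.
- exact: deletion_binom.
- by move=> A /(subsetP (deletion_sub x F)) /Fdense.
- exact: link_binom.
- move=> B /imsetP[A]; rewrite inE => /andP[AF _] ->.
  exact: initially_dense_setD1 (x_late A AF) (Fdense A AF).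
Qed.

Lemma shadow_initially_dense k F :
  F \subset binom setT k ->
  {in F, forall A, initially_dense c A} -> #|F| <= c.-1 * #|shadow k F|.
Proof. by rewrite -(initseg_ge (leqnn n)); apply: shadow_initially_dense_initseg. Qed.

End InitiallyDense.

Theorem lemma4 (s k n : nat) (FF : {set {set 'I_n}}) :
  0 < s -> 0 < k -> 3 * (s + 1) * k - 1 <= n ->
  FF \subset binom [set: 'I_n] k ->
  (forall A, A \in FF -> exists l : nat,
       0 < l /\ l <= #|A :&: initseg n (3 * (s + 1) * l - 1)|) ->
  #|FF| <= (3 * s + 2) * #|shadow k FF|.
Proof.
move=> _ _ _ FFk FFdense.
have -> : 3 * s + 2 = (3 * (s + 1)).-1 by lia.
exact: shadow_initially_dense FFk FFdense.
Qed.
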